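(* For every positive integer $t$, every $t$-spike $Q$ with an associated $t$-spike partition $(B_1,\dots,B_t;C_1,\dots,C_t)$, and every labeling $L$ of $Q$ for which there exist distinct $p,q$ with $L(b)=p$ for all $b\in B_1\cup\dots\cup B_t$ and $L(c)=q$ for all $c\in C_1\cup\dots\cup C_t$, we have $\mathrm{cwd}(Q,L)\le 4$.
   Context: Graphs are finite and simple. For disjoint vertex sets $X,Y$, $X$ is complete (anticomplete) to $Y$ if every vertex of $X$ is adjacent (nonadjacent) to every vertex of $Y$. A $t$-spike is a graph $Q$ whose vertex set can be partitioned into nonempty cliques $B_1,\dots,B_t,C_1,\dots,C_t$ such that the $B_i$ are pairwise anticomplete, the $C_i$ are pairwise complete, $B_i$ is anticomplete to $C_j$ for all $i\ne j$, and for each $i$, $B_i$ can be ordered $b^i_1,\dots,b^i_{r_i}$ so that $N_Q(b^i_{r_i})\cap C_i\subseteq\dots\subseteq N_Q(b^i_1)\cap C_i$; $(B_1,\dots,B_t;C_1,\dots,C_t)$ is then a $t$-spike partition. A labeling of $Q$ is any function with domain $V(Q)$, and $(Q,L)$ is a labeled graph. The clique-width $\mathrm{cwd}(Q,L)$ is the minimum number of labels needed to construct $Q$ with final labeling exactly $L$ using: (1) creation of a new vertex with label $i$; (2) disjoint union of two labeled graphs; (3) joining by an edge every vertex labeled $i$ to every vertex labeled $j$ ($i\ne j$); (4) renaming label $i$ to label $j$. *)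

From mathcomp Require Import all_boot.
Set Implicit Arguments. Unset Strict Implicit. Unset Printing Implicit Defensive.

Section GraphDefs.
Variables (T : finType) (adj : rel T).

Definition complete (X Y : {set T}) : Prop :=
  forall x y, x \in X -> y \in Y -> adj x y.
Definition anticomplete (X Y : {set T}) : Prop :=
  forall x y, x \in X -> y \in Y -> ~~ adj x y.
Definition is_clique (X : {set T}) : Prop :=
  forall x y, x \in X -> y \in X -> x != y -> adj x y.
Definition nbhd (v : T) : {set T} := [set u | adj v u].

Definition is_spike_partition (t : nat) (B C : 'I_t -> {set T}) : Prop :=
  (forall i, B i != set0 /\ C i != set0 /\ is_clique (B i) /\ is_clique (C i)) /\
  (forall x : T, exists i, (x \in B i) || (x \in C i)) /\
  (forall i j, i != j -> [disjoint B i & B j] /\ [disjoint C i & C j]) /\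
  (forall i j, [disjoint B i & C j]) /\
  (forall i j, i != j ->
     anticomplete (B i) (B j) /\ complete (C i) (C j) /\ anticomplete (B i) (C j)) /\
  (forall i, exists s : seq T, uniq s /\ s =i B i /\
     forall x y, x \in s -> y \in s -> index x s <= index y s ->
       nbhd y :&: C i \subset nbhd x :&: C i).
End GraphDefs.

Inductive cw_expr : Type :=
| CWVtx of nat
| CWUnion of cw_expr & cw_expr
| CWJoin of nat & nat & cw_expr
| CWRename of nat & nat & cw_expr.

(* Vertices of the constructed graph are addressed by paths (seq bool) in the
   expression tree. *)
Fixpoint cw_vertices (e : cw_expr) : seq (seq bool) :=
  match e with
  | CWVtx _ => [:: [::]]
  | CWUnion e1 e2 => map (cons false) (cw_vertices e1) ++ map (cons true) (cw_vertices e2)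
  | CWJoin _ _ e' => cw_vertices e'
  | CWRename _ _ e' => cw_vertices e'
  end.

Fixpoint cw_label (e : cw_expr) (v : seq bool) : nat :=
  match e with
  | CWVtx i => i
  | CWUnion e1 e2 =>
      match v with
      | b :: w => if b then cw_label e2 w else cw_label e1 w
      | [::] => 0
      end
  | CWJoin _ _ e' => cw_label e' v
  | CWRename i j e' => if cw_label e' v == i then j else cw_label e' v
  end.

Fixpoint cw_edge (e : cw_expr) (u v : seq bool) : bool :=
  match e with
  | CWVtx _ => false
  | CWUnion e1 e2 =>
      match u, v with
      | b :: u', c :: v' =>
          (b == c) && (if b then cw_edge e2 u' v' else cw_edge e1 u' v')
      | _, _ => false
      end
  | CWJoin i j e' =>
      cw_edge e' u v ||
      ((i != j) && (((cw_label e' u == i) && (cw_label e' v == j)) ||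
                    ((cw_label e' u == j) && (cw_label e' v == i))))
  | CWRename _ _ e' => cw_edge e' u v
  end.

Fixpoint cw_labels (e : cw_expr) : seq nat :=
  match e with
  | CWVtx i => [:: i]
  | CWUnion e1 e2 => cw_labels e1 ++ cw_labels e2
  | CWJoin i j e' => i :: j :: cw_labels e'
  | CWRename i j e' => i :: j :: cw_labels e'
  end.

Definition cw_num_labels (e : cw_expr) : nat := size (undup (cw_labels e)).

Definition cw_realizes (T : finType) (adj : rel T) (L : T -> nat) (e : cw_expr) : Prop :=
  exists h : T -> seq bool,
    injective h /\
    perm_eq (map h (enum T)) (cw_vertices e) /\
    (forall x y, adj x y = cw_edge e (h x) (h y)) /\
    (forall x, L x = cw_label e (h x)).

Definition cwd_le (T : finType) (adj : rel T) (L : T -> nat) (k : nat) : Prop :=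
  exists e : cw_expr, cw_num_labels e <= k /\ cw_realizes adj L e.

From mathcomp Require Import all_boot.
Set Implicit Arguments. Unset Strict Implicit. Unset Printing Implicit Defensive.

(* Each block B_i :|: C_i is grown one vertex at a time: by the nesting of the
   neighbourhoods, every nonempty part of a block contains either a vertex of C_i without
   neighbours in B_i or a vertex of B_i adjacent to all the others, and such a vertex is
   added with the temporary label q, joined to the right label classes and renamed, while
   B_i carries p and C_i a fresh label r.  Blocks are then added one by one: between
   different blocks the only edges are those between C-parts, so a single join q--r
   attaches the new block, after which r is renamed q.  Three labels suffice. *)

Lemma nonempty_set_ind (T : finType) (P : {set T} -> Prop) :
  (forall S : {set T}, S != set0 ->
     (forall S' : {set T}, S' \proper S -> S' != set0 -> P S') -> P S) ->
  forall S, S != set0 -> P S.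
Proof.
move=> IH S; have [n] := ubnP #|S|; elim: n S => // n IHn S; rewrite ltnS => leSn S0.
by apply: (IH S S0) => S' ltS' S'0; apply: IHn S'0; apply: leq_trans (proper_card ltS') leSn.
Qed.

Definition cw_realizes_on (T : finType) (S : {set T}) (adj : rel T) (L : T -> nat)
    (e : cw_expr) : Prop :=
  exists h : T -> seq bool, {in S &, injective h} /\
    perm_eq (map h (enum S)) (cw_vertices e) /\
    {in S &, forall x y, adj x y = cw_edge e (h x) (h y)} /\
    {in S, forall x, L x = cw_label e (h x)}.

Section Realization.
Variable T : finType.
Implicit Types (S : {set T}) (adj : rel T) (L : T -> nat).

Lemma cw_realizes_on_eq S adj adj' L L' e :
  cw_realizes_on S adj L e -> {in S &, adj' =2 adj} -> {in S, L' =1 L} ->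
  cw_realizes_on S adj' L' e.
Proof.
move=> [h [h_inj [h_perm [h_adj h_L]]]] adjE LE; exists h; do !split=> //.
- by move=> x y xS yS; rewrite adjE // h_adj.
- by move=> x xS; rewrite LE // h_L.
Qed.

Lemma cw_realizes_on_vtx (v : T) adj L :
  ~~ adj v v -> cw_realizes_on [set v] adj L (CWVtx (L v)).
Proof.
move=> /negbTE adj_vv; exists (fun=> [::]); do !split.
- by move=> x y /set1P-> /set1P->.
- by rewrite enum_set1.
- by move=> x y /set1P-> /set1P->.
- by move=> x /set1P->.
Qed.

Lemma cw_realizes_on_join S adj L e a b :
  a != b -> cw_realizes_on S adj L e ->
  cw_realizes_on S (fun x y => [|| adj x y, (L x == a) && (L y == b)
                                  | (L x == b) && (L y == a)]) L (CWJoin a b e).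
Proof.
move=> ab [h [h_inj [h_perm [h_adj h_L]]]]; exists h; do !split=> //.
by move=> x y xS yS /=; rewrite h_adj // ab -!h_L.
Qed.

Lemma cw_realizes_on_rename S adj L e a b :
  cw_realizes_on S adj L e ->
  cw_realizes_on S adj (fun x => if L x == a then b else L x) (CWRename a b e).
Proof.
move=> [h [h_inj [h_perm [h_adj h_L]]]]; exists h; do !split=> //.
by move=> x xS /=; rewrite h_L.
Qed.

Lemma cw_realizes_on_union S1 S2 adj L e1 e2 :
  [disjoint S1 & S2] -> cw_realizes_on S1 adj L e1 -> cw_realizes_on S2 adj L e2 ->
  cw_realizes_on (S1 :|: S2) (fun x y => adj x y && ((x \in S1) == (y \in S1))) L
    (CWUnion e1 e2).
Proof.
move=> S12 [h1 [h1_inj [h1_perm [h1_adj h1_L]]]] [h2 [h2_inj [h2_perm [h2_adj h2_L]]]].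
pose h x := if x \in S1 then false :: h1 x else true :: h2 x.
have S2_S1 x : x \in S2 -> x \in S1 = false by move/(disjointFl S12).
have S1orS2 x : x \in S1 :|: S2 -> x \notin S1 -> x \in S2.
  by case/setUP=> [->|].
exists h; do !split.
- move=> x y xS yS; rewrite /h.
  case: ifP => xS1; case: ifP => yS1 // [].
  + exact: h1_inj.
  + by apply: h2_inj; apply: S1orS2; rewrite ?xS1 ?yS1.
- have enumU : perm_eq (enum (S1 :|: S2)) (enum S1 ++ enum S2).
    apply: uniq_perm; rewrite ?enum_uniq ?cat_uniq ?enum_uniq //=.
      by rewrite andbT; apply/hasPn=> x; rewrite !mem_enum => /S2_S1->.
    by move=> x; rewrite mem_cat !mem_enum inE.
  apply: perm_trans (perm_map h enumU) _; rewrite map_cat /=.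
  have [-> ->] : map h (enum S1) = map (cons false) (map h1 (enum S1)) /\
                 map h (enum S2) = map (cons true) (map h2 (enum S2)).
    by split; rewrite -map_comp; apply/eq_in_map=> x; rewrite mem_enum /h => xS;
      rewrite ?xS ?S2_S1.
  by apply: perm_cat; rewrite perm_map.
- move=> x y xS yS; rewrite /h.
  case: ifP => xS1; case: ifP => yS1 /=; rewrite ?andbT ?andbF //.
  + exact: h1_adj.
  + by apply: h2_adj; apply: S1orS2; rewrite ?xS1 ?yS1.
- move=> x xS; rewrite /h; case: ifP => xS1 /=; first exact: h1_L.
  by apply: h2_L; apply: S1orS2; rewrite ?xS1.
Qed.

Lemma cw_realizes_on_joins S adj L e tmp (A : seq nat) :
  tmp \notin A -> cw_realizes_on S adj L e ->
  cw_realizes_on S (fun x y => [|| adj x y, (L x == tmp) && (L y \in A)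
                                  | (L y == tmp) && (L x \in A)]) L (foldr (CWJoin tmp) e A).
Proof.
move=> tmpA Re; elim: A tmpA => [_ | a A IHA] /=.
  by apply: cw_realizes_on_eq Re _ _ => // x y _ _; rewrite !in_nil !andbF !orbF.
rewrite inE negb_or => /andP[tmp_a /IHA Rjoins].
apply: cw_realizes_on_eq (cw_realizes_on_join tmp_a Rjoins) _ _ => // x y _ _.
rewrite !in_cons; case: (adj x y) => //=.
by case: (L x == tmp); case: (L y == tmp); case: (L x == a); case: (L y == a);
  case: (L x \in A); case: (L y \in A).
Qed.

Definition cw_add_vertex (e : cw_expr) (tmp : nat) (A : seq nat) (l : nat) : cw_expr :=
  CWRename tmp l (foldr (CWJoin tmp) (CWUnion e (CWVtx tmp)) A).

Lemma cw_labels_add_vertex e tmp A l (ls : seq nat) :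
  tmp \in ls -> l \in ls -> {subset A <= ls} -> {subset cw_labels e <= ls} ->
  {subset cw_labels (cw_add_vertex e tmp A l) <= ls}.
Proof.
move=> tmp_ls l_ls A_ls e_ls x /=; rewrite !inE => /predU1P[->//|/predU1P[->//|]].
elim: A A_ls => [_|a A IHA A_ls] /=; first by rewrite mem_cat inE => /orP[/e_ls|/eqP->].
rewrite !inE => /predU1P[->//|/predU1P[->|/IHA]]; first by apply: A_ls; rewrite inE eqxx.
by apply=> y Ay; apply: A_ls; rewrite inE Ay orbT.
Qed.

Lemma cw_realizes_on_add_vertex S v adj L e tmp A :
  symmetric adj -> ~~ adj v v -> v \notin S -> tmp \notin A ->
  {in S, forall x, L x != tmp} -> {in S, forall x, adj v x = (L x \in A)} ->
  cw_realizes_on S adj L e -> cw_realizes_on (v |: S) adj L (cw_add_vertex e tmp A (L v)).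
Proof.
move=> adj_sym adj_vv vS tmpA L_tmp adj_v Re.
pose L0 x := if x == v then tmp else L x.
have neq_v x : x \in S -> (x == v) = false by move=> xS; apply: contraNF vS => /eqP <-.
have R0 : cw_realizes_on S adj L0 e.
  by apply: cw_realizes_on_eq Re _ _ => // x xS; rewrite /L0 neq_v.
have Rv : cw_realizes_on [set v] adj L0 (CWVtx tmp).
  by have := cw_realizes_on_vtx L0 adj_vv; rewrite /L0 eqxx.
have Sv : [disjoint S & [set v]] by rewrite disjoint_sym disjoints1.
have := cw_realizes_on_rename tmp (L v) (cw_realizes_on_joins tmpA (cw_realizes_on_union Sv R0 Rv)).
rewrite setUC => RU; apply: cw_realizes_on_eq RU _ _.
- move=> x y; rewrite !inE => /predU1P[->|xS] /predU1P[->|yS];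
    rewrite /L0 ?eqxx ?neq_v ?(negbTE vS) ?(negbTE (L_tmp _ _)) ?xS ?yS //=.
  - by rewrite (negbTE adj_vv) (negbTE tmpA).
  - by rewrite andbF orbF adj_v.
  - by rewrite andbF adj_sym adj_v.
  - by rewrite andbT orbF.
- by move=> x; rewrite !inE => /predU1P[->|xS]; rewrite /L0 ?eqxx ?neq_v ?(negbTE (L_tmp _ _)).
Qed.

Lemma cw_realizes_on_glue S1 S2 adj L e1 e2 a b :
  symmetric adj -> [disjoint S1 & S2] -> a != b ->
  {in S1, forall x, L x != b} -> {in S2, forall y, L y != a} ->
  {in S1 & S2, forall x y, adj x y = (L x == a) && (L y == b)} ->
  cw_realizes_on S1 adj L e1 -> cw_realizes_on S2 adj L e2 ->
  cw_realizes_on (S1 :|: S2) adj L (CWJoin a b (CWUnion e1 e2)).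
Proof.
move=> adj_sym S12 ab L1b L2a adj12 R1 R2.
have S2_S1 y : y \in S2 -> y \in S1 = false by move/(disjointFl S12).
apply: cw_realizes_on_eq (cw_realizes_on_join ab (cw_realizes_on_union S12 R1 R2)) _ _ => //.
move=> x y /setUP[xS|xS] /setUP[yS|yS]; rewrite ?xS ?yS ?S2_S1 //=.
- by rewrite (negbTE (L1b x xS)) (negbTE (L1b y yS)) andbT !andbF !orbF.
- by rewrite (negbTE (L1b x xS)) andbF orbF adj12.
- by rewrite {1}adj_sym adj12 // (negbTE (L2a x xS)) andbF /= andbC.
- by rewrite (negbTE (L2a x xS)) (negbTE (L2a y yS)) andbT !andbF !orbF.
Qed.
End Realization.

Lemma cwd_le_of_realizes_on_setT (T : finType) (adj : rel T) (L : T -> nat) e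
    (ls : seq nat) k :
  {subset cw_labels e <= ls} -> cw_realizes_on [set: T] adj L e -> size ls <= k ->
  cwd_le adj L k.
Proof.
move=> e_ls [h [h_inj [h_perm [h_adj h_L]]]] ls_k; exists e; split.
  apply: leq_trans ls_k; apply: uniq_leq_size (undup_uniq _) _ => l.
  by rewrite mem_undup => /e_ls.
exists h; do !split.
- by move=> x y; apply: h_inj; rewrite inE.
- by rewrite enumT -enum_setT.
- by move=> x y; apply: h_adj; rewrite inE.
- by move=> x; apply: h_L; rewrite inE.
Qed.

Section NestedCliques.
Variables (T : finType) (adj : rel T) (B C : {set T}) (s : seq T).
Hypotheses (adj_sym : symmetric adj) (adj_irr : irreflexive adj).
Hypotheses (BC_disj : [disjoint B & C]) (B_clique : is_clique adj B) (C_clique : is_clique adj C).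
Hypothesis s_B : s =i B.
Hypothesis s_nested : forall x y, x \in s -> y \in s -> index x s <= index y s ->
  nbhd adj y :&: C \subset nbhd adj x :&: C.

(* The conclusion says: [v \in C] is adjacent exactly to [S :&: C], or [v \in B] is adjacent
   to all of [S].  If every vertex of [S :&: C] has a neighbour in [S :&: B], the vertex of
   [S :&: B] first in [s] has the largest neighbourhood in [C] and is of the second kind. *)
Lemma exists_peelable_vertex S : S != set0 -> S \subset B :|: C ->
  exists2 v, v \in S & {in S :\ v, forall x, adj v x = (v \in B) || (x \in C)}.
Proof.
move=> S0 SBC.
have inB x : x \in S -> x \notin C -> x \in B.
  by move=> /(subsetP SBC) /setUP[] // + /negP.
case: (boolP [exists c in S :&: C, [forall b in S :&: B, ~~ adj c b]]).
  case/exists_inP=> c /setIP[cS cC] /forall_inP c_noB; exists c => // x /setD1P[xc xS].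
  rewrite (disjointFl BC_disj cC) /=.
  have [xC|xC] := boolP (x \in C); first by apply: C_clique; rewrite // eq_sym.
  by apply/negbTE/c_noB; rewrite inE xS inB.
move=> all_C_hit.
have hitB c : c \in S -> c \in C -> exists2 b, b \in S :&: B & adj b c.
  move=> cS cC; apply/exists_inP; apply: contraR all_C_hit => noB.
  apply/exists_inP; exists c; first by rewrite inE cS cC.
  apply/forall_inP => b bSB; apply: contra noB => cb.
  by apply/exists_inP; exists b; rewrite // adj_sym.
have [b0 b0SB] : exists b0, b0 \in S :&: B.
  case/set0Pn: S0 => x xS; have [xC|xC] := boolP (x \in C).
    by have [b bSB _] := hitB x xS xC; exists b.
  by exists x; rewrite inE xS inB.
have [b /setIP[bS bB] b_min] := arg_minnP (fun x => index x s) b0SB.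
exists b => // x /setD1P[xb xS]; rewrite bB /=.
have [xC|xC] := boolP (x \in C); last by apply: B_clique; rewrite // ?inB // eq_sym.
have [b' b'SB b'x] := hitB x xS xC; have /setIP[_ b'B] := b'SB.
have [b_s b'_s] : b \in s /\ b' \in s by rewrite !s_B.
have /subsetP/(_ x) := s_nested b_s b'_s (b_min _ b'SB).
by rewrite !inE b'x xC => /(_ isT) /andP[].
Qed.

Variables (L : T -> nat) (lb lc tmp : nat).
Hypotheses (L_B : {in B, forall x, L x = lb}) (L_C : {in C, forall x, L x = lc}).
Hypotheses (lb_lc : lb != lc) (tmp_lb : tmp != lb) (tmp_lc : tmp != lc).

Lemma nested_cliques_label x : x \in B :|: C -> L x = if x \in C then lc else lb.
Proof.
by case/setUP=> [xB|xC]; [rewrite (disjointFr BC_disj xB) L_B | rewrite xC L_C].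
Qed.

Lemma nested_cliques_realizable S : S != set0 -> S \subset B :|: C ->
  exists2 e, {subset cw_labels e <= [:: lb; lc; tmp]} & cw_realizes_on S adj L e.
Proof.
move: S; apply: nonempty_set_ind => S S0 IH SBC.
have L_S x : x \in S -> L x = if x \in C then lc else lb.
  by move/(subsetP SBC)/nested_cliques_label.
have [v vS adj_v] := exists_peelable_vertex S0 SBC.
have adj_vv : ~~ adj v v by rewrite adj_irr.
have [Sv0|Sv0] := eqVneq (S :\ v) set0.
  have -> : S = [set v] by rewrite -(setD1K vS) Sv0 setU0.
  exists (CWVtx (L v)); last exact: cw_realizes_on_vtx.
  by move=> l; rewrite inE => /eqP->; rewrite L_S //; case: (v \in C); rewrite !inE eqxx ?orbT.
have [e e_labels Re] := IH _ (properD1 vS) Sv0 (subset_trans (subD1set S v) SBC).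
pose A := lc :: (if v \in B then [:: lb] else [::]).
exists (cw_add_vertex e tmp A (L v)).
  apply: cw_labels_add_vertex => //.
  - by rewrite !inE eqxx !orbT.
  - by rewrite L_S //; case: (v \in C); rewrite !inE eqxx ?orbT.
  - by apply/allP; rewrite /A; case: (v \in B); rewrite /= !inE !eqxx ?orbT.
rewrite -(setD1K vS); apply: cw_realizes_on_add_vertex => //.
- by rewrite setD11.
- by rewrite /A inE negb_or tmp_lc; case: (v \in B); rewrite ?inE.
- by move=> x /setD1P[_ xS]; rewrite L_S // eq_sym; case: (x \in C).
- move=> x xSv; have /setD1P[_ xS] := xSv; rewrite adj_v // L_S //.
  by rewrite /A; case: (v \in B); case: (x \in C); rewrite !inE ?eqxx ?orbT ?(negbTE lb_lc).
Qed.

End NestedCliques.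

Section Spike.
Variables (t : nat) (T : finType) (adj : rel T) (B C : 'I_t -> {set T}) (L : T -> nat).
Variables (p q r : nat).
Hypotheses (adj_sym : symmetric adj) (adj_irr : irreflexive adj).
Hypothesis spike : is_spike_partition adj B C.
Hypotheses (L_B : forall i b, b \in B i -> L b = p) (L_C : forall i c, c \in C i -> L c = q).
Hypotheses (p_q : p != q) (r_p : r != p) (r_q : r != q).

Lemma spike_cover x : exists i, x \in B i :|: C i.
Proof. by have [_ [cover _]] := spike; have [i xi] := cover x; exists i; rewrite inE. Qed.

Lemma spike_label_neq x : L x != r.
Proof. by have [i /setUP[/L_B|/L_C]->] := spike_cover x; rewrite eq_sym. Qed.

Lemma spike_adj_outside i y z : y \notin B i :|: C i -> z \in B i :|: C i ->
  adj y z = (L y == q) && (z \in C i).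
Proof.
have [_ [_ [_ [BC_disj [spike_adj _]]]]] := spike.
move=> yQ zQ; have [j yQj] := spike_cover y.
have ji : j != i by apply: contraNneq yQ => <-.
have [BjBi [CjCi BjCi]] := spike_adj j i ji.
have ij : i != j by rewrite eq_sym.
have [_ [_ BiCj]] := spike_adj i j ij.
case/setUP: yQj => yj; case/setUP: zQ => zi.
- by rewrite (L_B yj) (negbTE p_q); apply/negbTE/BjBi.
- by rewrite (L_B yj) (negbTE p_q); apply/negbTE/BjCi.
- by rewrite (L_C yj) eqxx (disjointFr (BC_disj i i) zi) adj_sym; apply/negbTE/BiCj.
- by rewrite (L_C yj) eqxx zi; apply: CjCi.
Qed.

Lemma spike_realizable S : S != set0 ->
  exists2 e, {subset cw_labels e <= [:: p; r; q]} & cw_realizes_on S adj L e.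
Proof.
move: S; apply: nonempty_set_ind => S S0 IH.
have /set0Pn[x xS] := S0; have [i xQ] := spike_cover x.
set Q := B i :|: C i.
pose L0 y := if y \in C i then r else L y.
have L0_r y : (L0 y == r) = (y \in C i).
  by rewrite /L0; case: ifP; rewrite ?eqxx // (negbTE (spike_label_neq y)).
suff [e e_labels Re] : exists2 e, {subset cw_labels e <= [:: p; r; q]} &
                                 cw_realizes_on S adj L0 e.
  exists (CWRename r q e).
    by move=> l /predU1P[->|/predU1P[->|/e_labels //]]; rewrite !inE eqxx ?orbT.
  apply: cw_realizes_on_eq (cw_realizes_on_rename r q Re) _ _ => // y _.
  by rewrite L0_r /L0; case: (boolP (y \in C i)) => //= /L_C.
have [[_ [_ [Bi_clique Ci_clique]]] [_ [_ [BC_disj [_ nested]]]]] := (spike.1 i, spike.2).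
have [s [_ [s_B s_nested]]] := nested i.
have SQ0 : S :&: Q != set0 by apply/set0Pn; exists x; rewrite inE xS.
have L0_B : {in B i, forall y, L0 y = p}.
  by move=> y yB; rewrite /L0 (disjointFr (BC_disj i i) yB) (L_B yB).
have L0_C : {in C i, forall y, L0 y = r} by move=> y yC; rewrite /L0 yC.
have [p_r q_p q_r] : [/\ p != r, q != p & q != r] by split; rewrite eq_sym.
have [ei ei_labels Ri] := nested_cliques_realizable adj_sym adj_irr (BC_disj i i)
  Bi_clique Ci_clique s_B s_nested L0_B L0_C p_r q_p q_r SQ0 (subsetIr S Q).
have [SQ|S'0] := eqVneq (S :\: Q) set0.
  by exists ei => //; move/eqP: SQ; rewrite setD_eq0 => /setIidPl <-.
have S'_proper : S :\: Q \proper S.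
  apply: sub_proper_trans (properD1 xS); apply/subsetP => y /setDP[yS yQ].
  by rewrite !inE yS andbT; apply: contraNneq yQ => ->.
have [e' e'_labels R'] := IH _ S'_proper S'0.
exists (CWJoin q r (CWUnion e' ei)).
  apply/allP; rewrite /= all_cat !inE !eqxx ?orbT /=.
  by apply/andP; split; apply/allP.
have notC y : y \notin Q -> y \notin C i by apply: contra => yC; rewrite !inE yC orbT.
have L0_out y : y \notin Q -> L0 y = L y by move/notC/negbTE; rewrite /L0 => ->.
rewrite -{1}(setID S Q) setUC; apply: cw_realizes_on_glue => //.
- by rewrite disjoint_subset; apply/subsetP => y /setDP[_ yQ]; rewrite inE /= inE negb_and yQ orbT.
- by move=> y /setDP[_ /notC]; rewrite L0_r.
- by move=> y /setIP[_ /setUP[/L0_B|/L0_C]] ->.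
- move=> y z /setDP[_ yQ] /setIP[_ zQ].
  by rewrite L0_r L0_out // (spike_adj_outside yQ zQ).
- by apply: cw_realizes_on_eq R' _ _ => // y /setDP[_ /L0_out].
Qed.
End Spike.

Theorem proposition8p5 (t : nat) (T : finType) (adj : rel T)
    (Hsym : symmetric adj) (Hirr : irreflexive adj)
    (B C : 'I_t -> {set T}) (L : T -> nat) (p q : nat) :
  0 < t ->
  is_spike_partition adj B C ->
  p != q ->
  (forall i b, b \in B i -> L b = p) ->
  (forall i c, c \in C i -> L c = q) ->
  cwd_le adj L 4.
Proof.
move=> t_gt0 spike p_q L_B L_C.
pose r := (p + q).+1.
have r_p : r != p by rewrite gtn_eqF // ltnS leq_addr.
have r_q : r != q by rewrite gtn_eqF // ltnS leq_addl.
have T0 : [set: T] != set0.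
  by have [/set0Pn[x _] _] := spike.1 (Ordinal t_gt0); apply/set0Pn; exists x.
have [e e_labels Re] := spike_realizable Hsym Hirr spike L_B L_C p_q r_p r_q T0.
exact: cwd_le_of_realizes_on_setT e_labels Re _.
Qed.
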